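(* Let $(S_t)_{t\in\mathbb{Z}}$ be a stationary process over a finite alphabet $\mathcal{A}$ that is order-$R$ Markovian for some integer $R\ge 1$, i.e. $\Pr(S_i\mid \ldots,S_{i-2},S_{i-1})=\Pr(S_i\mid S_{i-R},\ldots,S_{i-1})$. Then its synchronization information $\mathbf{S}$ and transient information $\mathbf{T}$ (defined below) satisfy $$\mathbf{S}=\mathbf{T}+\tfrac12 R(R+1)\,h_\mu .$$
   Context: For $L\ge1$ let $H(L)=-\sum_{s^L\in\mathcal{A}^L}\Pr(s^L)\log_2\Pr(s^L)$ be the Shannon entropy of the block $S_1\cdots S_L$, and set $H(0)=0$. Let $h_\mu(L)=H(L)-H(L-1)$ for $L\ge1$, let $h_\mu=\lim_{L\to\infty}H(L)/L$ (the entropy rate), and let $\mathbf{E}=\sum_{L=1}^\infty[h_\mu(L)-h_\mu]$ (the excess entropy). For an order-$R$ Markov process $\mathbf{E}$ is finite. The transient information is $\mathbf{T}=\sum_{L=0}^\infty[\mathbf{E}+h_\mu L-H(L)]$. Synchronization: the process is modeled as a Markov chain whose states are the $R$-blocks (states are in one-to-one correspondence with the words of length $R$; transitions slide the block by one symbol), with stationary distribution $\pi(s^R)=\Pr(s^R)$. An observer who knows this model but not the current state starts with distribution $\pi$ over the state $(S_1,\ldots,S_R)$, and after observing $s_1\cdots s_L$ holds the conditional distribution $\Pr(v\mid s^L)$ over states $v$ consistent with the observations: for $L\le R$ this is the conditional distribution of the $R$-block $(S_1,\ldots,S_R)$ given $S_1\cdots S_L=s^L$, and for $L\ge R$ the current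 state (the last $R$ observed symbols) is determined. The average state-uncertainty is $\mathcal{H}(L)=-\sum_{s^L}\Pr(s^L)\sum_v\Pr(v\mid s^L)\log_2\Pr(v\mid s^L)$, and the synchronization information is $\mathbf{S}=\sum_{L=0}^\infty\mathcal{H}(L)$. *)

From HB Require Import structures.
From mathcomp Require Import all_boot all_order all_algebra.
From mathcomp Require Import all_classical all_reals all_analysis.
Set Implicit Arguments. Unset Strict Implicit. Unset Printing Implicit Defensive.
Import Order.TTheory GRing.Theory Num.Theory.
Local Open Scope ring_scope.

Section Defs.
Variables (R : realType) (A : finType).

Definition xlog2 (x : R) : R := if x == 0 then 0 else x * (ln x / ln 2).

(* A stationary process over A, given by its block probabilities
   p w = Pr(S_1 ... S_|w| = w) (finite-dimensional distributions; they are
   consistent under extension on the right and, by stationarity, on the left). *)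
Definition stationary_process (p : seq A -> R) : Prop :=
  [/\ p [::] = 1,
      (forall w, 0 <= p w),
      (forall w, p w = \sum_(a : A) p (rcons w a)) &
      (forall w, p w = \sum_(a : A) p (a :: w))].

(* Order-R Markov: Pr(S_{L+1} | S_1..S_L) = Pr(S_{L+1} | S_{L-R+1}..S_L),
   written without division:
   Pr(w a) Pr(last R of w) = Pr(w) Pr((last R of w) a), for |w| >= R. *)
Definition markov_order (p : seq A -> R) (Rm : nat) : Prop :=
  forall (w : seq A) (a : A), (Rm <= size w)%N ->
    p (rcons w a) * p (drop (size w - Rm) w) =
    p w * p (rcons (drop (size w - Rm) w) a).

Definition block_entropy (p : seq A -> R) (L : nat) : R :=
  - \sum_(w : L.-tuple A) xlog2 (p w).

(* Observer's conditional distribution over states v (R-blocks) after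
   observing s (of length L). *)
Definition cond_state (p : seq A -> R) (Rm L : nat) (s : L.-tuple A)
    (v : Rm.-tuple A) : R :=
  if (L <= Rm)%N then
    (if take L (tval v) == tval s then p v / p s else 0)
  else (if tval v == drop (L - Rm) (tval s) then 1 else 0).

Definition state_uncertainty (p : seq A -> R) (Rm L : nat) : R :=
  - \sum_(s : L.-tuple A) p s * \sum_(v : Rm.-tuple A) xlog2 (@cond_state p Rm L s v).

End Defs.

From HB Require Import structures.
From mathcomp Require Import all_boot all_order all_algebra.
From mathcomp Require Import all_classical all_reals all_analysis.
From mathcomp Require Import ring.
Import Order.TTheory GRing.Theory Num.Theory.
Import numFieldNormedType.Exports.
Local Open Scope ring_scope.
Local Open Scope classical_set_scope.
Set Implicit Arguments. Unset Strict Implicit. Unset Printing Implicit Defensive.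

(* By the chain rule, after L <= R observed symbols the observer's remaining
   uncertainty about the R-block is H(R) - H(L), and it vanishes for L >= R.
   By the Markov property and stationarity, H(L+1) - H(L) is the same
   conditional entropy of a symbol given the preceding R-block for every
   L >= R, so H is affine from R on: H(L) = H(R) + (L - R) h.  Hence
   E = H(R) - R h, and the series for S and T are finite sums over L < R
   whose terms differ by H(R) - E - L h = (R - L) h; summing gives
   R(R+1)/2 h. *)

Section TupleSums.
Variables (V : nmodType) (A : finType).

Lemma sum_tuple0 (F : seq A -> V) : \sum_(w : 0.-tuple A) F w = F [::].
Proof. by rewrite (big_pred1 [tuple]) // => t; apply/esym/eqP; exact: tuple0. Qed.

Lemma sum_tupleS n (F : seq A -> V) :
  \sum_(w : n.+1.-tuple A) F w = \sum_(a : A) \sum_(w : n.-tuple A) F (a :: w).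
Proof.
rewrite pair_big /= (reindex (fun x : A * n.-tuple A => [tuple of x.1 :: x.2])).
  by apply: eq_bigr => -[a w].
exists (fun t : n.+1.-tuple A => (thead t, [tuple of behead t])).
  by move=> [a w] _; congr pair; apply: val_inj.
by move=> t _; rewrite [RHS]tuple_eta; apply: val_inj.
Qed.

Lemma sum_tuple_rcons n (F : seq A -> V) :
  \sum_(w : n.+1.-tuple A) F w = \sum_(w : n.-tuple A) \sum_(a : A) F (rcons w a).
Proof.
elim: n F => [|n IH] F.
  rewrite sum_tupleS (sum_tuple0 (fun w => \sum_a F (rcons w a))).
  by apply: eq_bigr => a _; rewrite (sum_tuple0 (fun w => F (a :: w))).
rewrite sum_tupleS (sum_tupleS n (fun w => \sum_a F (rcons w a))).
by apply: eq_bigr => a _; rewrite (IH (fun w => F (a :: w))).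
Qed.

Lemma sum_tuple_cat m k n (F : seq A -> V) : (m + k)%N = n ->
  \sum_(w : n.-tuple A) F w =
  \sum_(u : m.-tuple A) \sum_(v : k.-tuple A) F (u ++ v).
Proof.
move=> <-; elim: k F => [|k IH] F.
  rewrite addn0; apply: eq_bigr => u _.
  by rewrite (sum_tuple0 (fun v => F (u ++ v))) cats0.
rewrite addnS sum_tuple_rcons (IH (fun w => \sum_a F (rcons w a))).
apply: eq_bigr => u _; rewrite (sum_tuple_rcons _ (fun v => F (u ++ v))).
by apply: eq_bigr => v _; apply: eq_bigr => a _; rewrite rcons_cat.
Qed.

End TupleSums.

Lemma ler_sum_term (R : numDomainType) (I : finType) (F : I -> R) (i : I) :
  (forall j, 0 <= F j) -> F i <= \sum_j F j.
Proof. by move=> F0; rewrite (bigD1 i) //= lerDl sumr_ge0. Qed.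

Lemma sumr_sub_nat (R : numFieldType) n :
  \sum_(0 <= i < n) (n%:R - i%:R : R) = (n * n.+1)%:R / 2.
Proof.
elim: n => [|n IH]; first by rewrite big_geq // mul0r.
rewrite big_nat_recr //= (eq_bigr (fun i => (n%:R - i%:R) + 1)); last first.
  by move=> i _; rewrite -natr1; ring.
by rewrite big_split /= IH sumr_const_nat subn0 !natrM -!natr1; field.
Qed.

Lemma cvg_series_eventually0 (R : numFieldType) (u : nat -> R) N :
  (forall k, (N <= k)%N -> u k = 0) ->
  series u @ \oo --> \sum_(0 <= k < N) u k.
Proof.
move=> u0; apply: cvg_near_cst; exists N => // n /= Nn.
rewrite /series /= (big_cat_nat (leq0n N) Nn) /= [X in _ + X]big_nat_cond.
by rewrite [X in _ + X]big1 ?addr0 // => k /andP[/andP[+ _] _]; exact: u0.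
Qed.

Section Xlog2.
Variable R : realType.

Lemma xlog2E (x : R) : xlog2 x = x * (ln x / ln 2).
Proof. by rewrite /xlog2; case: eqP => [->|//]; rewrite mul0r. Qed.

Lemma xlog20 : xlog2 (0 : R) = 0.
Proof. by rewrite /xlog2 eqxx. Qed.

Lemma xlog21 : xlog2 (1 : R) = 0.
Proof. by rewrite xlog2E ln1 mul0r mulr0. Qed.

Lemma xlog2M (x y : R) : 0 <= x -> 0 <= y ->
  xlog2 (x * y) = y * xlog2 x + x * xlog2 y.
Proof.
rewrite le0r => /orP[/eqP->|x0]; first by rewrite mul0r xlog20 mulr0 mul0r addr0.
rewrite le0r => /orP[/eqP->|y0]; first by rewrite mulr0 xlog20 mulr0 mul0r addr0.
by rewrite !xlog2E lnM ?posrE //; ring.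
Qed.

Lemma mul_xlog2_div (x y : R) : 0 <= x -> 0 <= y -> (y = 0 -> x = 0) ->
  y * xlog2 (x / y) = xlog2 x - x * (ln y / ln 2).
Proof.
move=> x_ge0; rewrite le0r => /orP[/eqP->|y0] xy0.
  by rewrite xy0 // mul0r xlog20 mul0r subr0.
move: x_ge0; rewrite le0r => /orP[/eqP->|x0].
  by rewrite mul0r xlog20 mulr0 mul0r subr0.
have ln2_neq0 : ln (2 : R) != 0 by rewrite gt_eqF // ln_gt0 // ltr1n.
rewrite !xlog2E ln_div ?posrE //; field.
by rewrite ln2_neq0 gt_eqF.
Qed.

End Xlog2.

Section StationaryProcess.
Variables (R : realType) (A : finType) (p : seq A -> R).
Hypothesis p_stat : stationary_process p.

Local Notation H := (block_entropy p).

Lemma process_ge0 w : 0 <= p w.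
Proof. by case: p_stat. Qed.

Lemma process_rcons_le w a : p (rcons w a) <= p w.
Proof.
case: p_stat => _ _ p_sumr _; rewrite [p w]p_sumr.
by apply: ler_sum_term => b; exact: process_ge0.
Qed.

Lemma process_catl_le u s : p (u ++ s) <= p s.
Proof.
elim: u => [//|a u IH] /=; apply: le_trans IH.
case: p_stat => _ _ _ p_suml; rewrite [p (u ++ s)]p_suml.
by apply: ler_sum_term => b; exact: process_ge0.
Qed.

Lemma process_catr_le s u : p (s ++ u) <= p s.
Proof.
elim/last_ind: u => [|u a IH]; first by rewrite cats0.
by rewrite -rcons_cat; exact: le_trans (process_rcons_le _ _) IH.
Qed.

Lemma process_eq0_le w v : p v = 0 -> p w <= p v -> p w = 0.
Proof. by move=> -> wv0; apply/eqP; rewrite eq_le wv0 process_ge0. Qed.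

Lemma sum_process_catr k s : \sum_(v : k.-tuple A) p (s ++ v) = p s.
Proof.
elim: k => [|k IH]; first by rewrite (sum_tuple0 (fun v => p (s ++ v))) cats0.
rewrite (sum_tuple_rcons _ (fun v => p (s ++ v))) -[RHS]IH.
case: p_stat => _ _ p_sumr _; apply: eq_bigr => v _.
by rewrite [p (s ++ v)]p_sumr; apply: eq_bigr => a _; rewrite rcons_cat.
Qed.

Lemma sum_process_catl k s : \sum_(u : k.-tuple A) p (u ++ s) = p s.
Proof.
elim: k s => [|k IH] s; first by rewrite (sum_tuple0 (fun u => p (u ++ s))).
rewrite (sum_tuple_rcons _ (fun u => p (u ++ s))).
under eq_bigr do under eq_bigr do rewrite cat_rcons.
case: p_stat => _ _ _ p_suml; rewrite exchange_big [RHS]p_suml.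
by apply: eq_bigr => a _; exact: IH.
Qed.

Lemma block_entropy0 : H 0 = 0.
Proof.
rewrite /block_entropy (sum_tuple0 (fun w => xlog2 (p w))).
by case: p_stat => -> _ _ _; rewrite xlog21 oppr0.
Qed.

Variable Rm : nat.

Lemma state_uncertainty_le L : (L <= Rm)%N ->
  state_uncertainty p Rm L = H Rm - H L.
Proof.
move=> LRm; pose cond (s v : seq A) := if take L v == s then p v / p s else 0.
have cond_sum (s : L.-tuple A) :
    p s * \sum_(v : Rm.-tuple A) xlog2 (cond s v) =
    \sum_(w : (Rm - L).-tuple A) xlog2 (p (s ++ w)) - xlog2 (p s).
  rewrite (sum_tuple_cat (fun v => xlog2 (cond s v)) (subnKC LRm)) /cond.
  under eq_bigr do under eq_bigr do rewrite take_size_cat ?size_tuple //.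
  rewrite (bigD1 s) //= eqxx [X in _ + X]big1 ?addr0; last first.
    by move=> u /negbTE us; apply: big1 => w _; rewrite (ifF _ _ us) xlog20.
  have cond_term (w : (Rm - L).-tuple A) : p s * xlog2 (p (s ++ w) / p s) =
      xlog2 (p (s ++ w)) - p (s ++ w) * (ln (p s) / ln 2).
    apply: mul_xlog2_div; rewrite ?process_ge0 // => s0.
    exact: process_eq0_le s0 (process_catr_le _ _).
  rewrite mulr_sumr (eq_bigr _ (fun w _ => cond_term w)).
  by rewrite sumrB -mulr_suml sum_process_catr -xlog2E.
rewrite /state_uncertainty /cond_state LRm.
under eq_bigr do rewrite cond_sum.
rewrite sumrB /block_entropy (sum_tuple_cat (fun v => xlog2 (p v)) (subnKC LRm)).
by rewrite opprB opprK addrC.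
Qed.

Lemma state_uncertainty_gt L : (Rm < L)%N -> state_uncertainty p Rm L = 0.
Proof.
move=> RmL; rewrite /state_uncertainty big1 ?oppr0 // => s _.
rewrite big1 ?mulr0 // => v _; rewrite /cond_state leqNgt RmL /=.
by case: ifP => _; rewrite ?xlog21 ?xlog20.
Qed.

Definition next_entropy (s : seq A) : R :=
  - \sum_(a : A) xlog2 (p (rcons s a) / p s).

Hypothesis p_markov : markov_order p Rm.

Lemma markov_xlog2_rcons w : (Rm <= size w)%N ->
  \sum_(a : A) xlog2 (p (rcons w a)) =
  xlog2 (p w) - p w * next_entropy (drop (size w - Rm) w).
Proof.
move=> Rmw; set s := drop _ w.
have ps0_pw0 : p s = 0 -> p w = 0.
  move=> s0; apply: process_eq0_le s0 _.
  by rewrite -{1}(cat_take_drop (size w - Rm) w) process_catl_le.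
have p_rcons a : p (rcons w a) = p w * (p (rcons s a) / p s).
  have [/ps0_pw0 w0|s_neq0] := eqVneq (p s) 0.
    by rewrite w0 mul0r; exact: process_eq0_le w0 (process_rcons_le _ _).
  by rewrite mulrA -p_markov // mulfK.
under eq_bigr do rewrite p_rcons xlog2M ?process_ge0 ?divr_ge0 ?process_ge0 //.
rewrite big_split /= -mulr_suml -mulr_sumr /next_entropy mulrN opprK.
case: p_stat => _ _ p_sumr _; rewrite -mulr_suml -p_sumr; congr (_ + _).
have [/ps0_pw0 w0|s_neq0] := eqVneq (p s) 0; last by rewrite divff // mul1r.
by rewrite w0 xlog20 mulr0.
Qed.

Lemma block_entropy_increment L : (Rm <= L)%N ->
  H L.+1 - H L = \sum_(s : Rm.-tuple A) p s * next_entropy s.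
Proof.
move=> RmL; rewrite /block_entropy (sum_tuple_rcons _ (fun w => xlog2 (p w))).
under eq_bigr => w _ do rewrite markov_xlog2_rcons ?size_tuple //.
rewrite sumrB opprB opprK subrK.
rewrite (sum_tuple_cat (fun w => p w * next_entropy (drop (L - Rm) w)) (subnK RmL)).
rewrite exchange_big /=; apply: eq_bigr => s _.
rewrite -[in RHS](sum_process_catl (L - Rm) s) mulr_suml; apply: eq_bigr => u _.
by rewrite drop_size_cat // size_tuple.
Qed.

Definition markov_entropy_rate : R := H Rm.+1 - H Rm.
Local Notation h := markov_entropy_rate.

Lemma block_entropy_affine L : (Rm <= L)%N ->
  H L = H Rm + (L%:R - Rm%:R) * h.
Proof.
move=> RmL; rewrite -(subnK RmL); elim: (L - Rm)%N => [|n IH].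
  by rewrite add0n subrr mul0r addr0.
have := block_entropy_increment (leq_addl n Rm).
rewrite -(block_entropy_increment (leqnn Rm)) -/h addSn => incr.
by rewrite -[H _](subrK (H (n + Rm)%N)) incr IH !natrD -!natr1; ring.
Qed.

Definition markov_excess_entropy : R := H Rm - Rm%:R * h.
Local Notation E := markov_excess_entropy.

Definition markov_transient_information : R :=
  \sum_(0 <= L < Rm) (E + h * L%:R - H L).

Definition markov_synchronization_information : R :=
  \sum_(0 <= L < Rm) (H Rm - H L).

Lemma cvg_markov_entropy_rate : (fun L => H L / L%:R) @ \oo --> h.
Proof.
rewrite -cvg_shiftS /=.
have : (fun n => E * harmonic n + h) @ \oo --> E * 0 + h.
  by apply: cvgD; [apply: cvgMl_tmp; exact: cvg_harmonic | exact: cvg_cst].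
rewrite mulr0 add0r; apply: cvg_trans; apply: near_eq_cvg.
exists Rm => // n /= Rmn; rewrite block_entropy_affine ?leqW // /E.
by field; rewrite addrC natr1 pnatr_eq0.
Qed.

Lemma cvg_markov_excess_entropy :
  series (fun k => H k.+1 - H k - h) @ \oo --> E.
Proof.
have -> : E = \sum_(0 <= k < Rm) (H k.+1 - H k - h).
  rewrite big_split /= telescope_sumr // block_entropy0 subr0.
  by rewrite sumrN sumr_const_nat subn0 /E mulr_natl.
apply: cvg_series_eventually0 => k Rmk.
by rewrite (block_entropy_increment Rmk) -(block_entropy_increment (leqnn Rm)) subrr.
Qed.

Lemma cvg_markov_transient_information :
  series (fun L => E + h * L%:R - H L) @ \oo --> markov_transient_information.
Proof.
by apply: cvg_series_eventually0 => L RmL; rewrite block_entropy_affine // /E; ring.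
Qed.

Lemma cvg_markov_synchronization_information :
  series (state_uncertainty p Rm) @ \oo --> markov_synchronization_information.
Proof.
have -> : markov_synchronization_information =
    \sum_(0 <= L < Rm) state_uncertainty p Rm L.
  apply: eq_big_nat => L /andP[_ LRm].
  by rewrite state_uncertainty_le // ltnW.
apply: cvg_series_eventually0 => L; rewrite leq_eqVlt => /orP[/eqP <-|RmL].
  by rewrite state_uncertainty_le // subrr.
exact: state_uncertainty_gt.
Qed.

Lemma markov_synchronization_transientE :
  markov_synchronization_information =
  markov_transient_information + (Rm * Rm.+1)%:R / 2 * h.
Proof.
rewrite -sumr_sub_nat mulr_suml -big_split /=.
by apply: eq_bigr => L _; rewrite /E; ring.
Qed.

End StationaryProcess.

Theorem theorem1 (R : realType) (A : finType) (p : seq A -> R) (Rm : nat) :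
  stationary_process p -> (1 <= Rm)%N -> markov_order p Rm ->
  exists h E T S : R,
    [/\ (fun L : nat => block_entropy p L / L%:R) @ \oo --> h,
        (* E = sum_{L>=1} [h_mu(L) - h_mu] *)
        series (fun k : nat => block_entropy p k.+1 - block_entropy p k - h) @ \oo --> E,
        (* T = sum_{L>=0} [E + h_mu L - H(L)] *)
        series (fun L : nat => E + h * L%:R - block_entropy p L) @ \oo --> T,
        (* S = sum_{L>=0} \mathcal{H}(L) *)
        series (fun L : nat => state_uncertainty p Rm L) @ \oo --> S &
        S = T + (Rm * Rm.+1)%:R / 2 * h].
Proof.
move=> p_stat _ p_markov.
exists (markov_entropy_rate p Rm), (markov_excess_entropy p Rm),
  (markov_transient_information p Rm), (markov_synchronization_information p Rm).
split.
- exact: cvg_markov_entropy_rate.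
- exact: cvg_markov_excess_entropy.
- exact: cvg_markov_transient_information.
- exact: cvg_markov_synchronization_information.
- exact: markov_synchronization_transientE.
Qed.
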